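(* Let $\vec f=(f_1,\dots,f_n)$ be a profile of acknowledgement-based protocols. The following are equivalent: (i) $\vec f$ is an equilibrium; (ii) for every player $i\in[n]$: (a) $C_i^{(\vec f_{-i},g_i)}(h_0)=C_i^{(\vec f_{-i},r_i)}(h_0)=C_i^{\vec f}(h_0)$ for all $g_i,r_i\in\mathcal G_i^{\vec f}$, and (b) $C_i^{(\vec f_{-i},g_i)}(h_0)\le C_i^{(\vec f_{-i},r_i)}(h_0)$ for all $g_i\in\mathcal G_i^{\vec f}$ and all protocols $r_i\notin\mathcal G_i^{\vec f}$ of player $i$.
   Context: Contention game: $n$ players, channels $K=\{1,\dots,k\}$, slots $t=1,2,\dots$; each player has one packet, initially pending; in each slot a pending player chooses (possibly randomly) an action in $A=\{0,1,\dots,k\}$ ($0$ = idle, $a$ = transmit on channel $a$); a lone transmitter on a channel succeeds and leaves, colliding transmitters remain pending. $X_{i,t}$ is player $i$'s action at slot $t$, $h_{i,t}$ her personal history. Acknowledgement-based protocols: decision rules depend only on $h_{i,t-1}$; only transmitting players learn whether they succeeded. $T_i$ is player $i$'s latency and $C_i^{\vec g}(h_0)=\mathbb E[T_i\mid\vec g]$ her unconditional expected latency under profile $\vec g$; $(\vec f_{-i},g_i)$ is $\vec f$ with $f_i$ replaced by $g_i$. $\vec f$ is an equilibrium if for every $i$, slot $t$ and history, player $i$ cannot decrease her conditional expected latency by unilaterally deviating after $t$. For $\tau^*\ge1$ and $h_{i,\tau^*}=(a_{i,1},\dots,a_{i,\tau^*})$, $g_i(h_{i,\tau^*})$ plays $a_{i,t}$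 with probability $1$ for $1\le t\le\tau^*$ and follows $f_{i,t}$ for $t>\tau^*$. $h_{i,\tau^*}$ is consistent with $\vec f$ if it occurs for player $i$ with positive probability under $\vec f$; $\mathcal G_i^{\vec f}$ is the set of all $g_i(h_{i,\tau^*})$, $\tau^*\ge1$, with $h_{i,\tau^*}$ consistent with $\vec f$. *)

From mathcomp Require Import all_boot all_order all_algebra.
From mathcomp Require Import boolp classical_sets reals constructive_ereal ereal topology normedtype sequences.
Set Implicit Arguments. Unset Strict Implicit. Unset Printing Implicit Defensive.
Import Order.TTheory GRing.Theory Num.Theory.
Local Open Scope ring_scope.

(* Actions: 'I_k.+1, with ord0 = idle and j (1 <= j <= k) = transmit on channel j. *)

(* An acknowledgement-based protocol (decision rules): given the list of the
   player's own past actions h = (a_1,...,a_{t-1}) (while pending, this is her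
   whole personal history: all past transmissions failed), the distribution
   f h : action -> probability of the action at slot t = size h + 1. *)
Definition prot (R : realType) (k : nat) := seq 'I_k.+1 -> 'I_k.+1 -> R.

Definition valid_prot (R : realType) (k : nat) (p : prot R k) : Prop :=
  forall h : seq 'I_k.+1, (forall a, 0 <= p h a) /\ \sum_(a < k.+1) p h a = 1.

Section Game.
Variables (R : realType) (n k : nat).

(* A joint action record over the first m slots (slots are 0-indexed here:
   slot s below is slot s+1 of the paper).  After a player has left, her
   recorded actions are forced to be idle (ord0) by the weight. *)
Definition traj (m : nat) := {ffun 'I_n -> m.-tuple 'I_k.+1}.

Definition act m (w : traj m) (i : 'I_n) (s : nat) : 'I_k.+1 := nth ord0 (w i) s.

Definition succ m (w : traj m) (i : 'I_n) (s : nat) : bool :=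
  (act w i s != ord0) && [forall j : 'I_n, (j != i) ==> (act w j s != act w i s)].

Definition pendb m (w : traj m) (i : 'I_n) (s : nat) : bool :=
  [forall s' : 'I_m, (s' < s)%N ==> ~~ succ w i s'].

Definition weight (F : 'I_n -> prot R k) m (w : traj m) : R :=
  \prod_(s < m) \prod_(j < n)
     (if pendb w j s then F j (take s (w j)) (act w j s)
      else ((act w j s == ord0)%:R : R)).

Definition Pr (F : 'I_n -> prot R k) m (E : pred (traj m)) : R :=
  \sum_(w : traj m | E w) weight F w.

Definition upd (F : 'I_n -> prot R k) (i : 'I_n) (g : prot R k) : 'I_n -> prot R k :=
  fun j => if j == i then g else F j.

(* unconditional expected latency C_i^F(h_0) = E[T_i] = sum_{t>=0} P(T_i > t)
   (valued in the extended reals; T_i may be infinite) *)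
Definition cost (F : 'I_n -> prot R k) (i : 'I_n) : \bar R :=
  (\sum_(0 <= t <oo) (Pr F (fun w : traj t => pendb w i t))%:E)%E.

(* probability of the history a = (a_1..a_t) of player i with i still pending
   after slot t (the conditioning event of the equilibrium definition) *)
Definition Pr_hist (F : 'I_n -> prot R k) (i : 'I_n) (a : seq 'I_k.+1) : R :=
  Pr F (fun w : traj (size a) => pendb w i (size a) && (val (w i) == a)).

(* P(T_i > s and history a pending):  the event is
   {T_i > max(s, t), first t actions of i = a}. *)
Definition Pr_tail_hist (F : 'I_n -> prot R k) (i : 'I_n) (a : seq 'I_k.+1) (s : nat) : R :=
  Pr F (fun w : traj (maxn s (size a)) =>
          pendb w i (maxn s (size a)) && (take (size a) (w i) == a)).

(* conditional expected latency E[T_i | history a] = E[T_i 1_E] / P(E) *)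
Definition condcost (F : 'I_n -> prot R k) (i : 'I_n) (a : seq 'I_k.+1) : \bar R :=
  ((Pr_hist F i a)^-1)%:E *
  (\sum_(0 <= s <oo) (Pr_tail_hist F i a s)%:E)%E.

Definition equilibrium (F : 'I_n -> prot R k) : Prop :=
  forall (i : 'I_n) (a : seq 'I_k.+1), 0 < Pr_hist F i a ->
  forall g : prot R k, valid_prot g ->
    (forall h, (size h < size a)%N -> g h = F i h) ->
    (condcost F i a <= condcost (upd F i g) i a)%E.

Definition consistent (F : 'I_n -> prot R k) (i : 'I_n) (h : seq 'I_k.+1) : Prop :=
  0 < Pr F (fun w : traj (size h) => pendb w i (size h).-1 && (val (w i) == h)).

Definition gdev (f : prot R k) (h : seq 'I_k.+1) : prot R k :=
  fun h' => if (size h' < size h)%N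
            then (fun a => ((a == nth ord0 h (size h')) %:R : R))
            else f h'.

Definition inG (F : 'I_n -> prot R k) (i : 'I_n) (g : prot R k) : Prop :=
  exists h : seq 'I_k.+1, (0 < size h)%N /\ consistent F i h /\ g = gdev (F i) h.

End Game.

From Pilot Require Import Defs.
From mathcomp Require Import all_boot all_order all_algebra.
From mathcomp Require Import boolp classical_sets reals constructive_ereal ereal topology normedtype sequences.
From mathcomp Require Import lra.
Import Order.TTheory GRing.Theory Num.Theory.
Local Open Scope ring_scope.
Set Implicit Arguments. Unset Strict Implicit. Unset Printing Implicit Defensive.

(* Once the first t actions of player i are fixed, her latency is affine in her
   behaviour afterwards: the deviation g_i(h) is the mixture, with weights
   f_i(h)(b), of the deviations g_i(h b).  Hence if f_i minimises C_i among all
   protocols of player i, so does every g_i(h) with h of positive probability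
   (a convex combination of values >= C_i that equals C_i has all its terms of
   positive weight equal to C_i).  Conversely, for a deviation g agreeing with f_i before
   a history a, the conditional latency after a is P(a)^-1 P_g(a) times the
   latency of g_i(a) restricted to the history a, and that series differs from
   the unconditional latency of g_i(a) only by a finite head that does not
   depend on g.  So (i) and (ii) are both equivalent to "f_i minimises C_i",
   using for (ii) that G_i^f is never empty. *)

Lemma nneseries_split_head (R : realType) (u : nat -> R) N : (forall t, 0 <= u t) ->
  (\sum_(0 <= t <oo) (u t)%:E =
   \sum_(0 <= t < N) (u t)%:E + \sum_(0 <= t <oo) (u (t + N)%N)%:E)%E.
Proof.
move=> u_ge0; rewrite (@nneseries_split _ (fun t => (u t)%:E) 0 N); last first.
  by move=> t _; rewrite lee_fin.
rewrite add0n; congr (_ + _)%E.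
by rewrite -(@nneseries_addn _ (fun t => (u t)%:E)) // => t; rewrite lee_fin.
Qed.

Lemma nneseries_le_change_head (R : realType) (u1 u2 v1 v2 : nat -> R) N :
  (forall t, 0 <= u1 t) -> (forall t, 0 <= u2 t) ->
  (forall t, 0 <= v1 t) -> (forall t, 0 <= v2 t) ->
  (forall t, (t < N)%N -> u1 t = u2 t) -> (forall t, (t < N)%N -> v1 t = v2 t) ->
  (forall t, (N <= t)%N -> u1 t = v1 t) -> (forall t, (N <= t)%N -> u2 t = v2 t) ->
  (\sum_(0 <= t <oo) (v1 t)%:E <= \sum_(0 <= t <oo) (v2 t)%:E)%E ->
  (\sum_(0 <= t <oo) (u1 t)%:E <= \sum_(0 <= t <oo) (u2 t)%:E)%E.
Proof.
move=> u1_ge0 u2_ge0 v1_ge0 v2_ge0 head_u head_v tail1 tail2.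
rewrite (nneseries_split_head N u1_ge0) (nneseries_split_head N u2_ge0).
rewrite (nneseries_split_head N v1_ge0) (nneseries_split_head N v2_ge0).
have -> : (\sum_(0 <= t < N) (u1 t)%:E = \sum_(0 <= t < N) (u2 t)%:E)%E.
  by apply: eq_big_nat => t /andP[_ tN]; rewrite head_u.
have -> : (\sum_(0 <= t < N) (v1 t)%:E = \sum_(0 <= t < N) (v2 t)%:E)%E.
  by apply: eq_big_nat => t /andP[_ tN]; rewrite head_v.
have -> : (\sum_(0 <= t <oo) (u1 (t + N)%N)%:E = \sum_(0 <= t <oo) (v1 (t + N)%N)%:E)%E.
  by apply: eq_eseriesr => t _; rewrite tail1 // leq_addl.
have -> : (\sum_(0 <= t <oo) (u2 (t + N)%N)%:E = \sum_(0 <= t <oo) (v2 (t + N)%N)%:E)%E.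
  by apply: eq_eseriesr => t _; rewrite tail2 // leq_addl.
by rewrite sumEFin leeD2lE // => /leeD2l.
Qed.

Lemma convex_comb_ge_eq (R : realType) K (c : 'I_K -> R) (y : 'I_K -> \bar R) (x : \bar R) b0 :
  (forall b, 0 <= c b) -> \sum_b c b = 1 -> (0 <= x)%E -> (forall b, x <= y b)%E ->
  x = (\sum_b (c b)%:E * y b)%E -> 0 < c b0 -> y b0 = x.
Proof.
move=> c_ge0 c_sum1 x_ge0 x_le_y x_eq c_b0_gt0.
have rest_le : ((c b0)%:E * y b0 + \sum_(b | b != b0) (c b)%:E * x <= x)%E.
  rewrite [leRHS]x_eq [leRHS](bigD1 b0) //=; apply: leeD2l.
  by apply: lee_sum => b _; apply: lee_wpmul2l; rewrite ?lee_fin.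
have c_rest : \sum_(b | b != b0) c b = 1 - c b0.
  by move: c_sum1; rewrite (bigD1 b0) //= => <-; rewrite addrAC subrr add0r.
apply/le_anti; rewrite x_le_y andbT.
move: rest_le x_ge0; clear x_le_y x_eq; case: (y b0) => [s| |]; case: x => [r| |] //=.
- rewrite -EFinM; under eq_bigr do rewrite -EFinM.
  by rewrite sumEFin -EFinD !lee_fin -mulr_suml c_rest => ? _; nra.
- by move=> _ _; rewrite leey.
- rewrite mulry gtr0_sg // mul1e; under eq_bigr do rewrite -EFinM.
  by rewrite sumEFin addye.
- by move=> _ _; rewrite leNye.
Qed.

Section ContentionGame.
Variables (R : realType) (n k : nat).
Local Notation traj m := (traj n k m).
Local Notation prot := (prot R k).
Implicit Types (F G : 'I_n -> prot) (f g x y : prot) (i j : 'I_n) (a h : seq 'I_k.+1).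

Definition prot_ge0 g := forall h b, 0 <= g h b.

Definition profile_ge0 F := forall j, prot_ge0 (F j).

Lemma valid_prot_ge0 g : valid_prot g -> prot_ge0 g.
Proof. by move=> g_valid h b; case: (g_valid h) => /(_ b). Qed.

Lemma pendb_le m (w : traj m) i s s' : (s' <= s)%N -> pendb w i s -> pendb w i s'.
Proof.
move=> le_s's /forallP pend; apply/forallP => r; apply/implyP => lt_rs'.
exact: implyP (pend r) (leq_trans lt_rs' le_s's).
Qed.

Lemma upd_id F i : upd F i (F i) = F.
Proof. by apply/funext => j; rewrite /upd; case: eqP => // ->. Qed.

Lemma profile_ge0_upd F i g : profile_ge0 F -> prot_ge0 g -> profile_ge0 (upd F i g).
Proof. by move=> F_ge0 g_ge0 j; rewrite /upd; case: eqP. Qed.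

Lemma gdev_nil g : gdev g [::] = g.
Proof. by apply/funext => h; rewrite /gdev ltn0. Qed.

Lemma gdev_ge0 g a : prot_ge0 g -> prot_ge0 (gdev g a).
Proof. by move=> g_ge0 h b; rewrite /gdev; case: ifP => _; [exact: ler0n | exact: g_ge0]. Qed.

Lemma valid_gdev g a : valid_prot g -> valid_prot (gdev g a).
Proof.
move=> g_valid h; split; first exact: gdev_ge0 (valid_prot_ge0 g_valid) h.
rewrite /gdev; case: ifP => _; last by case: (g_valid h).
by rewrite (bigD1 (nth ord0 a (size h))) //= eqxx big1 ?addr0 // => b /negbTE ->.
Qed.

Lemma gdev_rcons f h b h' : size h' != size h -> gdev f (rcons h b) h' = gdev f h h'.
Proof.
rewrite /gdev size_rcons ltnS leq_eqVlt => /negbTE ->/=.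
by case: ifP => // lt_h'h; rewrite nth_rcons lt_h'h.
Qed.

Lemma gdev_eq_prefix x y a h : (size h < size a)%N -> gdev x a h = gdev y a h.
Proof. by rewrite /gdev => ->. Qed.

Definition step_weight g m (w : traj m) i s : R :=
  if pendb w i s then g (take s (w i)) (act w i s) else (act w i s == ord0)%:R.

Definition own_weight g m (w : traj m) i : R := \prod_(s < m) step_weight g w i s.

Definition others_weight F m (w : traj m) i : R :=
  \prod_(s < m) \prod_(j < n | j != i) step_weight (F j) w j s.

Lemma weight_upd F i g m (w : traj m) :
  weight (upd F i g) w = others_weight F w i * own_weight g w i.
Proof.
rewrite /weight /others_weight /own_weight -big_split /=; apply: eq_bigr => s _.
rewrite (bigD1 i) //= mulrC /upd eqxx; congr (_ * _).
by apply: eq_bigr => j /negbTE ->.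
Qed.

Lemma eq_step_weight f g m (w : traj m) i s :
  f (take s (w i)) = g (take s (w i)) -> step_weight f w i s = step_weight g w i s.
Proof. by rewrite /step_weight => ->. Qed.

Lemma eq_weight F G m (w : traj m) :
  (forall j h, (size h < m)%N -> F j h = G j h) -> weight F w = weight G w.
Proof.
move=> eqFG; apply: eq_bigr => s _; apply: eq_bigr => j _.
by rewrite eqFG // size_take size_tuple ltn_ord.
Qed.

Lemma weight_ge0 F m (w : traj m) : profile_ge0 F -> 0 <= weight F w.
Proof.
move=> F_ge0; apply: prodr_ge0 => s _; apply: prodr_ge0 => j _.
by case: ifP => _; [exact: F_ge0 | exact: ler0n].
Qed.

Lemma Pr_ge0 F m (E : pred (traj m)) : profile_ge0 F -> 0 <= Pr F E.
Proof. by move=> F_ge0; apply: sumr_ge0 => w _; exact: weight_ge0. Qed.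

Lemma Pr_sub F m (E1 E2 : pred (traj m)) : profile_ge0 F ->
  (forall w, E1 w -> E2 w) -> Pr F E1 <= Pr F E2.
Proof.
move=> F_ge0 sub12; rewrite /Pr [leLHS]big_mkcond [leRHS]big_mkcond /=.
apply: ler_sum => w _; case E1w: (E1 w); first by rewrite sub12.
by case: ifP => // _; exact: weight_ge0.
Qed.

Lemma weight_le_Pr F m (E : pred (traj m)) w : profile_ge0 F -> E w -> weight F w <= Pr F E.
Proof.
move=> F_ge0 Ew; rewrite /Pr (bigD1 w) //= lerDl.
by apply: sumr_ge0 => ? _; exact: weight_ge0.
Qed.

Lemma Pr_gt0P F m (E : pred (traj m)) : 0 < Pr F E -> exists2 w, E w & 0 < weight F w.
Proof.
move=> PE_gt0; apply: contrapT => no_w; move: PE_gt0; apply/negP.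
rewrite -leNgt -oppr_ge0 -sumrN; apply: sumr_ge0 => w Ew.
by rewrite oppr_ge0 leNgt; apply/negP => w_gt0; apply: no_w; exists w.
Qed.

Definition hist_prob g a : R := \prod_(s < size a) g (take s a) (nth ord0 a s).

Lemma hist_prob_ge0 g a : prot_ge0 g -> 0 <= hist_prob g a.
Proof. by move=> g_ge0; apply: prodr_ge0 => s _; exact: g_ge0. Qed.

Lemma hist_prob_rcons g h b : hist_prob g (rcons h b) = hist_prob g h * g h b.
Proof.
rewrite /hist_prob size_rcons big_ord_recr /= -cats1; congr (_ * _).
  by apply: eq_bigr => s _; rewrite nth_cat ltn_ord takel_cat // ltnW.
by rewrite nth_cat ltnn subnn take_size_cat.
Qed.

Lemma eq_hist_prob f g a : (forall h, (size h < size a)%N -> f h = g h) ->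
  hist_prob f a = hist_prob g a.
Proof. by move=> eqfg; apply: eq_bigr => s _; rewrite eqfg // size_takel // ltnW. Qed.

Lemma step_weight_gdev_lt g a m (w : traj m) i s : (s < m)%N -> (s < size a)%N ->
  pendb w i s -> step_weight (gdev g a) w i s = (act w i s == nth ord0 a s)%:R.
Proof. by move=> sm sa ps; rewrite /step_weight ps /gdev size_take size_tuple sm sa. Qed.

Lemma step_weight_gdev_ge g a m (w : traj m) i s : (s < m)%N -> (size a <= s)%N ->
  step_weight (gdev g a) w i s = step_weight g w i s.
Proof.
by move=> sm a_le_s; apply: eq_step_weight; rewrite /gdev size_take size_tuple sm ltnNge a_le_s.
Qed.

Lemma own_weight_gdev g a m (w : traj m) i : (size a <= m)%N -> pendb w i (size a) ->
  take (size a) (w i) = a -> own_weight g w i = hist_prob g a * own_weight (gdev g a) w i.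
Proof.
move=> am pa wa.
rewrite /hist_prob (big_ord_widen m (fun s => g (take s a) (nth ord0 a s))) // big_mkcond.
rewrite /own_weight -big_split /=; apply: eq_bigr => s _.
case: ltnP => [sa|a_le_s]; last by rewrite step_weight_gdev_ge // mul1r.
have ps : pendb w i s by apply: pendb_le pa; exact: ltnW.
have act_s : act w i s = nth ord0 a s by rewrite /act -wa nth_take.
have take_s : take s (w i) = take s a by rewrite -[in RHS]wa take_takel // ltnW.
by rewrite step_weight_gdev_lt // act_s eqxx mulr1 /step_weight ps act_s take_s.
Qed.

Lemma own_weight_gdev_eq0 g a m (w : traj m) i p : (p <= size a)%N -> (p <= m)%N ->
  pendb w i p -> take p (w i) != take p a -> own_weight (gdev g a) w i = 0.
Proof.
move=> pa pm pp; apply: contraNeq => /prodf_neq0 nz.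
have wm : (p <= size (w i))%N by rewrite size_tuple.
apply/eqP/(@eq_from_nth _ ord0) => [|s]; rewrite !size_takel // => sp.
have sm := leq_trans sp pm; have sa := leq_trans sp pa.
have ps : pendb w i s := pendb_le (ltnW sp) pp.
have := nz (Ordinal sm) isT; rewrite /= (step_weight_gdev_lt _ sm sa ps).
by rewrite pnatr_eq0 eqb0 negbK !nth_take // => /eqP.
Qed.

Lemma own_weight_gdev_rcons_short f h b m (w : traj m) i : (m <= size h)%N ->
  own_weight (gdev f (rcons h b)) w i = own_weight (gdev f h) w i.
Proof.
move=> mh; apply: eq_bigr => s _; apply: eq_step_weight.
by rewrite gdev_rcons // size_take size_tuple ltn_ord neq_ltn (leq_trans (ltn_ord s) mh).
Qed.

Lemma own_weight_gdev_mix f h m (w : traj m) i : \sum_(b < k.+1) f h b = 1 ->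
  own_weight (gdev f h) w i = \sum_(b < k.+1) f h b * own_weight (gdev f (rcons h b)) w i.
Proof.
move=> f_sum1; have [hm|mh] := ltnP (size h) m; last first.
  under eq_bigr do rewrite own_weight_gdev_rcons_short //.
  by rewrite -mulr_suml f_sum1 mul1r.
have hm' := ltnW hm.
(* a record where i is still pending at slot |h| without having played h has
   weight 0 under g_i(h) and under every g_i(h b) *)
have [/andP[ph wh]|w_h] := boolP (pendb w i (size h) && (take (size h) (w i) != h)).
  have take_rcons b : take (size h) (rcons h b) = h by rewrite -cats1 take_size_cat.
  have size_rcons_h b : (size h <= size (rcons h b))%N by rewrite size_rcons.
  rewrite (own_weight_gdev_eq0 _ (leqnn _) hm' ph) ?take_size // big1 // => b _.
  by rewrite (own_weight_gdev_eq0 _ (size_rcons_h b) hm' ph) ?take_rcons ?mulr0.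
pose s0 := Ordinal hm; pose Y := \prod_(s < m | s != s0) step_weight (gdev f h) w i s.
have split b :
    own_weight (gdev f (rcons h b)) w i = step_weight (gdev f (rcons h b)) w i s0 * Y.
  rewrite /own_weight (bigD1 s0) //=; congr (_ * _); apply: eq_bigr => s ne_s_s0.
  by apply: eq_step_weight; rewrite gdev_rcons // size_take size_tuple ltn_ord.
under eq_bigr do rewrite split mulrA.
rewrite -mulr_suml /own_weight (bigD1 s0) //= -/Y; congr (_ * _).
have [ps|nps] := boolP (pendb w i (size h)); last first.
  by rewrite /step_weight (negbTE nps) -mulr_suml f_sum1 mul1r.
have size_h_rcons b : (size h < size (rcons h b))%N by rewrite size_rcons.
under eq_bigr do rewrite (step_weight_gdev_lt _ hm (size_h_rcons _) ps) nth_rcons ltnn eqxx.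
rewrite (step_weight_gdev_ge _ _ _ hm (leqnn _)) /step_weight ps.
move: w_h; rewrite ps /= negbK => /eqP ->.
rewrite (bigD1 (act w i (size h))) //= eqxx mulr1 big1 ?addr0 // => b.
by rewrite eq_sym => /negbTE ->; rewrite mulr0.
Qed.

Lemma Pr_upd F i g m (E : pred (traj m)) :
  Pr (upd F i g) E = \sum_(w | E w) others_weight F w i * own_weight g w i.
Proof. by apply: eq_bigr => w _; rewrite weight_upd. Qed.

Lemma Pr_hist_nil F i : Pr_hist F i [::] = 1.
Proof.
rewrite /Pr_hist /Pr /=; transitivity (\sum_(w : traj 0) (1 : R)).
  apply: eq_big => w; last by rewrite /weight big_ord0.
  have -> : pendb w i 0 by apply/forallP => -[].
  by rewrite (tuple0 (w i)).
by rewrite sumr_const /Defs.traj card_ffun card_tuple expn0 exp1n.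
Qed.

Lemma condcost_nil F i : condcost F i [::] = cost F i.
Proof.
rewrite /condcost Pr_hist_nil invr1 mul1e; apply: eq_eseriesr => s _.
by congr (_%:E); apply: eq_bigl => w; rewrite take0 eqxx andbT.
Qed.

Lemma cost_gdev_mix F i f h : profile_ge0 F -> valid_prot f ->
  cost (upd F i (gdev f h)) i =
  (\sum_(b < k.+1) (f h b)%:E * cost (upd F i (gdev f (rcons h b))) i)%E.
Proof.
move=> F_ge0 f_valid; have f_ge0 := valid_prot_ge0 f_valid.
have f_sum1 : \sum_(b < k.+1) f h b = 1 by case: (f_valid h).
have Pr_ge0_rcons b t : 0 <= Pr (upd F i (gdev f (rcons h b))) (fun w : traj t => pendb w i t).
  by apply/Pr_ge0/profile_ge0_upd/gdev_ge0.
rewrite /cost; transitivity (\sum_(0 <= t <oo) \sum_(b < k.+1)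
   ((f h b)%:E * (Pr (upd F i (gdev f (rcons h b))) (fun w : traj t => pendb w i t))%:E))%E.
  apply: eq_eseriesr => t _; under eq_bigr do rewrite -EFinM.
  rewrite sumEFin Pr_upd; congr (_%:E).
  under eq_bigr do rewrite (own_weight_gdev_mix _ _ f_sum1) mulr_sumr.
  rewrite exchange_big /=; apply: eq_bigr => b _.
  by rewrite Pr_upd mulr_sumr; apply: eq_bigr => w _; rewrite mulrCA.
rewrite nneseries_sum; last by move=> b t _; rewrite mule_ge0 // lee_fin.
by apply: eq_bigr => b _; rewrite nneseriesZl // => t _; rewrite lee_fin.
Qed.

Lemma cost_gdev_hist F i h : profile_ge0 F -> valid_prot (F i) ->
  (forall g, valid_prot g -> (cost F i <= cost (upd F i g) i)%E) ->
  0 < hist_prob (F i) h -> cost (upd F i (gdev (F i) h)) i = cost F i.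
Proof.
move=> F_ge0 Fi_valid Fi_opt; elim/last_ind: h => [_|h b IHh].
  by rewrite gdev_nil upd_id.
rewrite hist_prob_rcons => hb_gt0.
have /andP[h_gt0 b_gt0] : (0 < hist_prob (F i) h) && (0 < F i h b).
  move: hb_gt0; rewrite lt0r mulf_eq0 negb_or -andbA => /and3P[h_neq0 b_neq0 _].
  by rewrite !lt0r h_neq0 b_neq0 hist_prob_ge0 // F_ge0.
apply: (@convex_comb_ge_eq _ _ (F i h)
  (fun b' => cost (upd F i (gdev (F i) (rcons h b'))) i) _ b) => //.
- exact: F_ge0.
- by case: (Fi_valid h).
- by rewrite /cost; apply: nneseries_ge0 => t _ _; rewrite lee_fin Pr_ge0.
- by move=> b'; apply/Fi_opt/valid_gdev.
- by rewrite -cost_gdev_mix // IHh.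
Qed.

Definition cost_on_hist F i a : \bar R := \sum_(0 <= s <oo) (Pr_tail_hist F i a s)%:E.

Lemma condcostE F i a : condcost F i a = (((Pr_hist F i a)^-1)%:E * cost_on_hist F i a)%E.
Proof. by []. Qed.

Lemma Pr_tail_hist_gdev F i g a s :
  Pr_tail_hist (upd F i g) i a s = hist_prob g a * Pr_tail_hist (upd F i (gdev g a)) i a s.
Proof.
rewrite /Pr_tail_hist !Pr_upd mulr_sumr; apply: eq_bigr => w /andP[pw /eqP wa].
by rewrite (own_weight_gdev g (leq_maxr _ _) (pendb_le (leq_maxr _ _) pw) wa) mulrCA.
Qed.

Lemma cost_on_hist_gdev F i g a : profile_ge0 F -> prot_ge0 g ->
  cost_on_hist (upd F i g) i a =
  ((hist_prob g a)%:E * cost_on_hist (upd F i (gdev g a)) i a)%E.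
Proof.
move=> F_ge0 g_ge0; rewrite /cost_on_hist.
under eq_eseriesr do rewrite Pr_tail_hist_gdev EFinM.
by rewrite nneseriesZl // => s _; rewrite lee_fin; apply/Pr_ge0/profile_ge0_upd/gdev_ge0.
Qed.

Lemma Pr_tail_hist_gdev_late F i g a s : (size a <= s)%N ->
  Pr_tail_hist (upd F i (gdev g a)) i a s =
  Pr (upd F i (gdev g a)) (fun w : traj s => pendb w i s).
Proof.
move=> a_le_s; rewrite /Pr_tail_hist (maxn_idPl a_le_s) /Pr.
rewrite [LHS]big_mkcond [RHS]big_mkcond; apply: eq_bigr => w _.
case pw: (pendb w i s) => //=; case: eqP => // /eqP wa.
have pwa : pendb w i (size a) := pendb_le a_le_s pw.
by rewrite weight_upd (own_weight_gdev_eq0 _ (leqnn _) a_le_s pwa) ?take_size ?mulr0.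
Qed.

Lemma weight_gdev_early F i x y a m (w : traj m) : (m <= size a)%N ->
  weight (upd F i (gdev x a)) w = weight (upd F i (gdev y a)) w.
Proof.
move=> ma; apply: eq_weight => j h hm; rewrite /upd; case: eqP => // _.
exact: gdev_eq_prefix (leq_trans hm ma).
Qed.

Lemma cost_on_hist_gdev_le F i x y a : profile_ge0 F -> prot_ge0 x -> prot_ge0 y ->
  (cost (upd F i (gdev x a)) i <= cost (upd F i (gdev y a)) i)%E ->
  (cost_on_hist (upd F i (gdev x a)) i a <= cost_on_hist (upd F i (gdev y a)) i a)%E.
Proof.
move=> F_ge0 x_ge0 y_ge0; apply: (nneseries_le_change_head (N := size a)).
- by move=> t; apply/Pr_ge0/profile_ge0_upd/gdev_ge0.
- by move=> t; apply/Pr_ge0/profile_ge0_upd/gdev_ge0.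
- by move=> t; apply/Pr_ge0/profile_ge0_upd/gdev_ge0.
- by move=> t; apply/Pr_ge0/profile_ge0_upd/gdev_ge0.
- move=> t ta; apply: eq_bigr => w _; apply: weight_gdev_early.
  by rewrite (maxn_idPr (ltnW ta)).
- by move=> t ta; apply: eq_bigr => w _; apply: weight_gdev_early; exact: ltnW.
- by move=> t; exact: Pr_tail_hist_gdev_late.
- by move=> t; exact: Pr_tail_hist_gdev_late.
Qed.

Lemma condcost_upd F i g a : profile_ge0 F -> prot_ge0 g ->
  condcost (upd F i g) i a =
  (((Pr_hist (upd F i g) i a)^-1 * hist_prob g a)%:E *
   cost_on_hist (upd F i (gdev g a)) i a)%E.
Proof. by move=> F_ge0 g_ge0; rewrite condcostE cost_on_hist_gdev // EFinM muleA. Qed.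

Lemma condcost_le_of_cost_gdev_le F i g a : profile_ge0 F -> prot_ge0 g ->
  (forall h, (size h < size a)%N -> g h = F i h) ->
  (cost (upd F i (gdev (F i) a)) i <= cost (upd F i (gdev g a)) i)%E ->
  (condcost F i a <= condcost (upd F i g) i a)%E.
Proof.
move=> F_ge0 g_ge0 g_eq le_cost.
have Pr_hist_eq : Pr_hist (upd F i g) i a = Pr_hist F i a.
  apply: eq_bigr => w _; apply: eq_weight => j h ha.
  by rewrite /upd; case: eqP => // ->; exact: g_eq.
have := condcost_upd i a F_ge0 (F_ge0 i); rewrite upd_id => ->.
rewrite condcost_upd // Pr_hist_eq (eq_hist_prob g_eq); apply: lee_wpmul2l.
  by rewrite lee_fin mulr_ge0 ?invr_ge0 ?hist_prob_ge0 ?Pr_ge0.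
exact: cost_on_hist_gdev_le.
Qed.

Lemma consistent_hist_prob_gt0 F i h : profile_ge0 F -> consistent F i h ->
  0 < hist_prob (F i) h.
Proof.
move=> F_ge0 /Pr_gt0P[w /andP[pw /eqP wh] w_gt0].
have own_w : own_weight (F i) w i = hist_prob (F i) h.
  apply: eq_bigr => s _; have wh' : tval (w i) = h := wh.
  have s_le : (s <= (size h).-1)%N by rewrite -ltnS (ltn_predK (ltn_ord s)).
  by rewrite /step_weight (pendb_le s_le pw) /act wh'.
rewrite lt0r hist_prob_ge0 ?andbT //; apply: contraTneq w_gt0 => hp0.
by rewrite -(upd_id F i) weight_upd own_w hp0 mulr0 ltxx.
Qed.

Lemma consistent_of_Pr_hist_gt0 F i a : profile_ge0 F -> 0 < Pr_hist F i a ->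
  consistent F i a.
Proof.
move=> F_ge0 Pa_gt0; apply: lt_le_trans Pa_gt0 _; apply: Pr_sub => // w /andP[pw ->].
by rewrite (pendb_le (leq_pred _) pw).
Qed.

Lemma valid_prot_exists_gt0 g h : valid_prot g -> exists b, 0 < g h b.
Proof.
move=> g_valid; apply: contrapT => no_b; have [_ sum1] := g_valid h.
suff : \sum_b g h b <= 0 by rewrite sum1 ler10.
rewrite -oppr_ge0 -sumrN; apply: sumr_ge0 => b _.
by rewrite oppr_ge0 leNgt; apply/negP => b_gt0; apply: no_b; exists b.
Qed.

Lemma exists_inG F i : (forall j, valid_prot (F j)) -> exists g, inG F i g.
Proof.
move=> F_valid; have F_ge0 j := valid_prot_ge0 (F_valid j).
have [b0 b0_gt0] := choice (fun j => valid_prot_exists_gt0 [::] (F_valid j)).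
pose w0 : traj 1 := [ffun j => [tuple b0 j]].
have pw0 j : pendb w0 j 0 by apply/forallP => -[].
exists (gdev (F i) [:: b0 i]), [:: b0 i]; split; first by []; split; last by [].
apply: lt_le_trans (weight_le_Pr (w := w0) F_ge0 _); last by rewrite /= pw0 ffunE; apply/eqP.
by rewrite /weight big_ord1; apply: prodr_gt0 => j _; rewrite pw0 /act ffunE.
Qed.

Lemma equilibrium_cost_le F : equilibrium F ->
  forall i g, valid_prot g -> (cost F i <= cost (upd F i g) i)%E.
Proof.
move=> F_eq i g g_valid; rewrite -!condcost_nil.
by apply: F_eq => //; rewrite Pr_hist_nil ltr01.
Qed.

Lemma equilibrium_of_cost_le F : (forall j, valid_prot (F j)) ->
  (forall i g, valid_prot g -> (cost F i <= cost (upd F i g) i)%E) -> equilibrium F.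
Proof.
move=> F_valid F_opt i a Pa_gt0 g g_valid g_eq.
have F_ge0 j := valid_prot_ge0 (F_valid j); have Fi_opt := F_opt i.
apply: condcost_le_of_cost_gdev_le => //; first exact: valid_prot_ge0.
rewrite cost_gdev_hist //; last exact/consistent_hist_prob_gt0/consistent_of_Pr_hist_gt0.
exact/F_opt/valid_gdev.
Qed.

End ContentionGame.

Theorem lemma2 (R : realType) (n k : nat) (F : 'I_n -> prot R k)
    (hF : forall i, valid_prot (F i)) :
  equilibrium F <->
  (forall i : 'I_n,
     (forall g r : prot R k, inG F i g -> inG F i r ->
        cost (upd F i g) i = cost (upd F i r) i /\
        cost (upd F i r) i = cost F i) /\
     (forall g r : prot R k, inG F i g -> valid_prot r -> ~ inG F i r ->
        (cost (upd F i g) i <= cost (upd F i r) i)%E)).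
Proof.
have F_ge0 j := valid_prot_ge0 (hF j).
have cost_inG i g : (forall r, valid_prot r -> (cost F i <= cost (upd F i r) i)%E) ->
    inG F i g -> cost (upd F i g) i = cost F i.
  move=> Fi_opt [h [_ [h_cons ->]]].
  by apply: cost_gdev_hist => //; exact: consistent_hist_prob_gt0.
split=> [/equilibrium_cost_le F_opt i | G_opt].
  have Fi_opt := F_opt i.
  split=> [g r g_in r_in | g r g_in r_valid _]; first by rewrite !cost_inG.
  by rewrite cost_inG //; exact: Fi_opt.
apply: equilibrium_of_cost_le => // i r r_valid.
have [G_eq G_le] := G_opt i; have [g g_in] := exists_inG i hF.
rewrite -(G_eq g g g_in g_in).2.
have [r_in|r_notin] := pselect (inG F i r); last exact: G_le.
by rewrite (G_eq g r g_in r_in).1.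
Qed.
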